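(* For all integers $k,\ell\ge 0$, every blowup $G$ of $F_{k,\ell}$ satisfies $\chi(G)\le\lceil\frac54\omega(G)\rceil$.
   Context: For integers $k,\ell\ge 0$, $F_{k,\ell}$ is the graph whose vertex set is partitioned into $A,B,U,W,\{x,y,z\}$ where: $A=\{a_0,\dots,a_k\}$ is a clique, $U=\{u_1,\dots,u_k\}$ is a stable set, and the only edges between $A$ and $U$ are $a_iu_i$ ($1\le i\le k$); $B=\{b_0,\dots,b_\ell\}$ is a clique, $W=\{w_1,\dots,w_\ell\}$ is a stable set, and the only edges between $B$ and $W$ are $b_jw_j$ ($1\le j\le\ell$); $N(x)=A\cup U\cup W\cup\{y\}$, $N(y)=B\cup U\cup W\cup\{x\}$, $N(z)=A\cup B$. A blowup of $H$ is any graph whose vertex set can be partitioned into $|V(H)|$ (not necessarily non-empty) cliques $Q_v$, with $Q_u$ complete to $Q_v$ if $uv\in E(H)$ and no edges between them otherwise. *)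

From mathcomp Require Import all_boot.
Set Implicit Arguments. Unset Strict Implicit. Unset Printing Implicit Defensive.

(* A (finite simple) graph is a symmetric irreflexive relation adj on a finType V. *)

(* Vertex set of F_{k,l}:
   inl (inl (inl i))  = a_i   (i : 'I_(k+1), i.e. a_0..a_k)
   inl (inl (inr j))  = u_(j+1) (j : 'I_k, i.e. u_1..u_k)
   inl (inr (inl i))  = b_i   (i : 'I_(l+1))
   inl (inr (inr j))  = w_(j+1) (j : 'I_l)
   inr 0 = x, inr 1 = y, inr 2 = z                                       *)
Definition FV (k l : nat) : finType :=
  (('I_k.+1 + 'I_k) + ('I_l.+1 + 'I_l) + 'I_3)%type.

Definition Fedge0 (k l : nat) (v w : FV k l) : bool :=
  match v, w with
  | inl (inl (inl _)), inl (inl (inl _)) => true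
  | inl (inl (inl i)), inl (inl (inr j)) => nat_of_ord i == j.+1
  | inl (inr (inl _)), inl (inr (inl _)) => true
  | inl (inr (inl i)), inl (inr (inr j)) => nat_of_ord i == j.+1
  | inr t, inl (inl (inl _)) => (nat_of_ord t == 0) || (nat_of_ord t == 2)
  | inr t, inl (inl (inr _)) => (nat_of_ord t == 0) || (nat_of_ord t == 1)
  | inr t, inl (inr (inl _)) => (nat_of_ord t == 1) || (nat_of_ord t == 2)
  | inr t, inl (inr (inr _)) => (nat_of_ord t == 0) || (nat_of_ord t == 1)
  | inr t, inr s => (nat_of_ord t == 0) && (nat_of_ord s == 1)
  | _, _ => false
  end.

Definition Fadj (k l : nat) : rel (FV k l) :=
  fun v w => (v != w) && (Fedge0 v w || Fedge0 w v).

(* G (on V with adjacency adj) is a blowup of H (on VH with adjacency adjH):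
   there is a map p : V -> VH (Q_h = p^-1(h), possibly empty) such that each
   Q_h is a clique, Q_h is complete to Q_h' if h h' adjacent, anticomplete otherwise. *)
Definition is_blowup (V VH : finType) (adj : rel V) (adjH : rel VH) : Prop :=
  exists p : V -> VH, forall x y : V, x != y ->
    adj x y = (p x == p y) || adjH (p x) (p y).

Definition is_clique (V : finType) (adj : rel V) (A : {set V}) : bool :=
  [forall x in A, forall y in A, (x != y) ==> adj x y].

Definition omega (V : finType) (adj : rel V) : nat :=
  \max_(A : {set V} | is_clique adj A) #|A|.

Definition colorable (V : finType) (adj : rel V) (c : nat) : bool :=
  [exists f : {ffun V -> 'I_c}, forall x, forall y, adj x y ==> (f x != f y)].

(* chromatic number: least c such that G is c-colourable
   (for a loopless graph this is at most #|V|, so the range c <= #|V| suffices) *)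
Definition chi (V : finType) (adj : rel V) : nat :=
  \big[minn/#|V|]_(c < #|V|.+1 | colorable adj c) c.

(* Colour the blowup with the c = (5 w + 3) %/ 4 colours [0, c), w the clique
   number, laid out on a line.  A gets [0, |A|) and B an interval right after,
   overlapping A in just the r colours forced when |A| + |B| + |Z| > c; Z comes
   next.  The hub y reuses the first colours of A and those after B, and x the
   last colours of B and the top of the palette.  Ordering A by index and
   splitting it between the colours shared with y and its private ones in a
   fixed proportion, each cell A_i spends few private colours; the cell U_i
   (complete to A_i, x and y) is then coloured from what is left, and the
   bounds |A_i| + |U_i| + |x| <= w, |x| + |y| + |U_i| <= w, the pairwise bounds
   on A, B, x, y, z and 5 w <= 4 c show that enough is left.  B and W are
   symmetric. *)

From HB Require Import structures.
From mathcomp Require Import all_boot zify.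
From Stdlib Require Import ZArith Lia.
Set Implicit Arguments. Unset Strict Implicit. Unset Printing Implicit Defensive.

Section Spread.
Variables (t n : nat).
Hypothesis t_le_n : t <= n.

(* Item [p] of [n] goes to the low band exactly when [p * t %/ n] steps up at
   [p]; so [t] items go low, and every run of consecutive items is split
   between the bands in proportion [t : n - t], up to rounding. *)
Definition low p := p * t %/ n.
Definition high p := p - low p.
Definition slot (lo hi p : nat) := if low p < low p.+1 then lo + low p else hi + high p.

Lemma low_le p : low p <= p.
Proof.
rewrite /low; case: (posnP n) => [->|n_gt0]; first by rewrite divn0.
by rewrite -[X in _ <= X](mulnK p n_gt0) leq_div2r // leq_mul2l t_le_n orbT.
Qed.

Lemma low_mono p p' : p <= p' -> low p <= low p'.
Proof. by move=> le_pp'; apply: leq_div2r; rewrite leq_mul2r le_pp' orbT. Qed.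

Lemma low_addn p m : low (p + m) <= low p + m.
Proof.
rewrite /low; case: (posnP n) => [->|n_gt0]; first by rewrite !divn0.
rewrite -divnDMl //; apply: leq_div2r.
by rewrite mulnDl leq_add2l leq_mul2l t_le_n orbT.
Qed.

Lemma low_addr s a : low s + a * t %/ n <= low (s + a).
Proof.
rewrite /low mulnDl; case: (posnP n) => [->|n_gt0]; first by rewrite !divn0.
by rewrite [X in _ <= X]divnD // leq_addr.
Qed.

Lemma high_mono p p' : p <= p' -> high p <= high p'.
Proof.
move=> le_pp'; have := low_addn p (p' - p); rewrite subnKC // /high.
have := low_le p; have := low_mono le_pp'; lia.
Qed.

Lemma low_total : 0 < n -> low n = t.
Proof. by move=> n_gt0; rewrite /low mulKn. Qed.

Lemma high_succ p : ~~ (low p < low p.+1) -> high p.+1 = (high p).+1.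
Proof.
move=> no_step; have E : low p.+1 = low p.
  by apply/eqP; rewrite eqn_leq leqNgt no_step low_mono.
by rewrite /high E; have := low_le p; lia.
Qed.

Lemma low_succ_le p : p < n -> low p.+1 <= t.
Proof. by move=> lt_pn; have := low_mono lt_pn; rewrite low_total //; case: n lt_pn. Qed.

Lemma slot_cases lo hi p : p < n ->
  (lo <= slot lo hi p < lo + t) \/
  (slot lo hi p = hi + high p /\ high p.+1 = (high p).+1).
Proof.
move=> lt_pn; rewrite /slot; case: ifP => step.
  by left; have := low_succ_le lt_pn; lia.
by right; split=> //; apply: high_succ; rewrite step.
Qed.

Lemma high_le p : p <= n -> high p <= n - t.
Proof.
move=> le_pn; have := high_mono le_pn; rewrite /high.
by case: (posnP n) => [->|/low_total->].
Qed.

Lemma slot_mem lo hi s a p : s <= p < s + a -> s + a <= n ->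
  (lo <= slot lo hi p < lo + t) || (hi + high s <= slot lo hi p < hi + high (s + a)).
Proof.
move=> /andP[le_sp lt_p] le_n.
case: (slot_cases lo hi (leq_trans lt_p le_n)) => [->//|[-> step]].
have := high_mono le_sp; have := high_mono (lt_p : p.+1 <= s + a); lia.
Qed.

Lemma slot_inj lo hi p p' : lo + t <= hi \/ hi + (n - t) <= lo ->
  p < n -> p' < n -> slot lo hi p = slot lo hi p' -> p = p'.
Proof.
move=> bands; wlog le_pp' : p p' / p <= p'.
  move=> W lt_pn lt_p'n E; case: (leqP p p') => [|/ltnW] le; first exact: W.
  by apply/esym/W.
move: le_pp'; rewrite leq_eqVlt => /orP[/eqP -> //|lt_pp'] lt_pn lt_p'n.
have := low_succ_le lt_pn; have := low_succ_le lt_p'n.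
have n_gt0 : 0 < n by case: n lt_pn.
have := high_mono lt_pn; have := high_mono lt_p'n; rewrite /high low_total //.
rewrite /slot; case: ifP => step; case: ifP => step'.
- have := low_mono lt_pp'; lia.
- have := high_succ (negbT step'); rewrite /high; lia.
- have := high_succ (negbT step); rewrite /high; lia.
- have := high_mono lt_pp'; have := high_succ (negbT step); rewrite /high; lia.
Qed.

End Spread.

(* The two cases [t = Y] and [t = A - r] of [cell_budget] below, cleared of
   the division by [A]. *)
Section BudgetArithmetic.
Local Open Scope Z_scope.

Lemma share_Y_budget (w c A X Y a u : Z) :
  0 <= A -> 0 <= X -> 0 <= Y -> 0 <= a -> 0 <= u -> 5 * w <= 4 * c ->
  A + X <= w -> X + Y <= w -> a <= A -> a + u + X <= w -> X + Y + u <= w ->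
  A * (X + Y + a + u) <= a * Y + A * c.
Proof.
intros.
assert (4 * Y * (A - Y) <= A * w) by (pose proof (Z.square_nonneg (A - 2 * Y)); nia).
assert (0 <= A * (c - w)) by nia.
destruct (Z.le_gt_cases a Y).
- assert (0 <= A * (w - X - Y - u)) by nia.
  destruct (Z.le_gt_cases A Y); nia.
- assert (0 <= A * (w - X - a - u)) by nia.
  nia.
Qed.

Lemma overflow_share (w c A B Y Z r m : Z) :
  0 <= A -> 0 <= Y -> 0 <= Z -> 0 <= m -> 0 <= w -> 5 * w <= 4 * c ->
  A + Z <= w -> B + Y <= w -> B + Z <= w ->
  (r = 0 \/ r = A + B + Z - c) -> 0 <= r -> m <= A -> m <= Y ->
  r * m <= A * (c - w).
Proof.
intros A_ge0 Y_ge0 Z_ge0 m_ge0 w_ge0 c_ge AZ BY BZ r_def r_ge0 m_le_A m_le_Y.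
set (d := c - w).
destruct (Z.le_gt_cases r d); [nia|].
destruct r_def as [-> | ->]; [lia|].
assert (m <= w - d - (A + B + Z - c)) by lia.
pose proof (Z.square_nonneg (2 * (A + B + Z - c) - (w - 2 * d))).
nia.
Qed.

Lemma share_A_budget (w c A B X Y Z a u r : Z) :
  0 <= A -> 0 <= X -> 0 <= Y -> 0 <= Z -> 0 <= a -> 0 <= u -> 0 <= w -> 5 * w <= 4 * c ->
  A + X <= w -> X + Y <= w -> A + Z <= w -> B + Y <= w -> B + Z <= w ->
  (r = 0 \/ r = A + B + Z - c) -> 0 <= r -> r <= A ->
  a <= A -> a + u + X <= w -> X + Y + u <= w ->
  A * (X + Y + a + u) <= a * (A - r) + A * c.
Proof.
intros.
destruct (Z.le_gt_cases a Y).
- pose proof (@overflow_share w c A B Y Z r a). nia.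
- pose proof (@overflow_share w c A B Y Z r Y). nia.
Qed.

End BudgetArithmetic.

Lemma cell_budget (w c A B X Y Z a u s r t : nat) :
  5 * w <= 4 * c -> A + X <= w -> A + Z <= w -> B + Y <= w -> B + Z <= w ->
  X + Y <= w -> r = A + B + Z - c -> t = minn Y (A - r) ->
  s + a <= A -> a + u + X <= w -> X + Y + u <= w ->
  u + X + Y + (high t A (s + a) - high t A s) <= c.
Proof.
move=> *; have t_le_A : t <= A by lia.
have budget : A * (X + Y + a + u) <= a * t + A * c.
  suff: (Z.of_nat A * (Z.of_nat X + Z.of_nat Y + Z.of_nat a + Z.of_nat u) <=
         Z.of_nat a * Z.of_nat t + Z.of_nat A * Z.of_nat c)%Z by lia.
  have [tY|tAr] : t = Y \/ t = A - r by lia.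
  - by rewrite tY; apply: (@share_Y_budget (Z.of_nat w)); lia.
  - have -> : Z.of_nat t = (Z.of_nat A - Z.of_nat r)%Z by lia.
    by apply: (@share_A_budget (Z.of_nat w) _ _ (Z.of_nat B) _ _ (Z.of_nat Z)); lia.
case: (posnP A) => [A0|A_gt0].
  have -> : a = 0 by lia.
  by rewrite addn0 subnn; lia.
have excess : X + Y + a + u - c <= a * t %/ A.
  rewrite leq_divRL // mulnBl leq_subLR mulnC.
  by apply: leq_trans budget _; rewrite addnC mulnC.
have := low_addr t A s a; have := low_le t_le_A s; have := low_le t_le_A (s + a).
rewrite /high; lia.
Qed.

Lemma card_predU_disjoint (T : finType) (P Q : pred T) :
  (forall x, P x -> ~~ Q x) ->
  #|[set x | P x || Q x]| = #|[set x | P x]| + #|[set x | Q x]|.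
Proof.
move=> PnQ; have -> : [set x | P x || Q x] = [set x | P x] :|: [set x | Q x].
  by apply/setP => x; rewrite !inE.
apply/eqP; rewrite (leq_card_setU _ _).2.
by rewrite disjoints_subset; apply/subsetP => x; rewrite !inE => /PnQ.
Qed.

Section Rank.
Variables (T : finType) (g : T -> nat).

Let key v := g v * #|T| + enum_rank v.

Let key_inj : injective key.
Proof.
move=> u v E; apply: enum_rank_inj; apply: val_inj.
have := congr1 (modn^~ #|T|) E; rewrite /= !modnMDl !modn_small //.
Qed.

Let key_mono u v : g u < g v -> key u < key v.
Proof.
move=> lt_uv; have : (g u).+1 * #|T| <= g v * #|T| by rewrite leq_mul2r lt_uv orbT.
have : enum_rank u < #|T| := ltn_ord _.
rewrite /key mulSn; lia.
Qed.

Definition rank (P : pred T) v := #|[set u | P u && (key u < key v)]|.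

Lemma rank_lt (P : pred T) v : P v -> rank P v < #|[set u | P u]|.
Proof.
move=> Pv; apply: proper_card; apply/properP; split.
  by apply/subsetP => u; rewrite !inE => /andP[].
by exists v; rewrite !inE ?Pv ?ltnn.
Qed.

Let rank_mono (P : pred T) u v : P u -> key u < key v -> rank P u < rank P v.
Proof.
move=> Pu lt_uv; apply: proper_card; apply/properP; split.
  by apply/subsetP => x; rewrite !inE => /andP[-> /ltn_trans->].
by exists u; rewrite !inE ?Pu ?ltnn ?lt_uv.
Qed.

Lemma rank_inj (P : pred T) u v : P u -> P v -> rank P u = rank P v -> u = v.
Proof.
move=> Pu Pv E; apply: key_inj.
case: (ltngtP (key u) (key v)) => // [/(rank_mono Pu) | /(rank_mono Pv)];
  by rewrite E ltnn.
Qed.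

Lemma rank_within_level (P : pred T) v : P v ->
  #|[set u | P u && (g u < g v)]| <= rank P v <
  #|[set u | P u && (g u < g v)]| + #|[set u | P u && (g u == g v)]|.
Proof.
move=> Pv; apply/andP; split.
  by apply: subset_leq_card; apply/subsetP => u; rewrite !inE => /andP[-> /key_mono].
rewrite -card_predU_disjoint => [|u /andP[_ /ltn_eqF->]]; last by rewrite andbF.
apply: proper_card; apply/properP; split.
  apply/subsetP => u; rewrite !inE => /andP[-> lt_uv] /=.
  by case: ltngtP => // /key_mono; rewrite ltnNge ltnW.
by exists v; rewrite !inE ?Pv ?eqxx ?orbT ?ltnn.
Qed.

Lemma card_level_le (P : pred T) i :
  #|[set u | P u && (g u < i)]| + #|[set u | P u && (g u == i)]| <= #|[set u | P u]|.
Proof.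
rewrite -card_predU_disjoint => [|u /andP[_ /ltn_eqF->]]; last by rewrite andbF.
by apply: subset_leq_card; apply/subsetP => u; rewrite !inE => /orP[] /andP[].
Qed.

End Rank.

Lemma count_orb_le (T : Type) (a b : pred T) s :
  count (fun x => a x || b x) s <= count a s + count b s.
Proof. by rewrite -count_predUI leq_addr. Qed.

Lemma count_interval n lo hi : count (fun x => lo <= x < hi) (iota 0 n) <= hi - lo.
Proof.
rewrite -size_filter -(size_iota lo (hi - lo)).
apply: uniq_leq_size; first exact/filter_uniq/iota_uniq.
by move=> x; rewrite mem_filter !mem_iota => /andP[/andP[lo_x x_hi] _]; rewrite lo_x /=; lia.
Qed.

Lemma size_filter_iotaC n (F : pred nat) :
  size [seq x <- iota 0 n | ~~ F x] = n - count F (iota 0 n).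
Proof. by rewrite size_filter -[n in n - _](size_iota 0 n) -(count_predC F) addKn. Qed.

Inductive part := PA | PU | PB | PW | PX | PY | PZ.

(* Transparent, so that [==] on concrete parts computes. *)
Lemma part_comparable : comparable part.
Proof. by move=> P Q; rewrite /decidable; decide equality. Defined.
HB.instance Definition _ := comparableMixin part_comparable.

Definition is_hub (P : part) : bool :=
  match P with PX | PY | PZ => true | _ => false end.

Definition linked (P : part) (i : nat) (Q : part) (j : nat) : bool :=
  match P, Q with
  | PA, PA | PB, PB => true
  | PA, PU | PU, PA | PB, PW | PW, PB => i == j
  | PX, (PA | PU | PW | PY) | (PA | PU | PW | PY), PX => true
  | PY, (PU | PB | PW) | (PU | PB | PW), PY => true
  | PZ, (PA | PB) | (PA | PB), PZ => true
  | _, _ => false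
  end.

Section GraphF.
Variables k l : nat.

Definition part_of (h : FV k l) : part :=
  match h with
  | inl (inl (inl _)) => PA | inl (inl (inr _)) => PU
  | inl (inr (inl _)) => PB | inl (inr (inr _)) => PW
  | inr t => match nat_of_ord t with 0 => PX | 1 => PY | _ => PZ end
  end.

(* u_i and a_i share the index i (likewise w_j and b_j); hubs get index 0. *)
Definition index_of (h : FV k l) : nat :=
  match h with
  | inl (inl (inl i)) | inl (inr (inl i)) => i
  | inl (inl (inr j)) | inl (inr (inr j)) => j.+1
  | inr _ => 0
  end.

Lemma index_of_hub h : is_hub (part_of h) -> index_of h = 0.
Proof. by case: h => [[[]|[]]|]. Qed.

Lemma eq_FV h h' :
  (h == h') = (part_of h == part_of h') && (index_of h == index_of h').
Proof.
apply/eqP/andP => [-> // | [/eqP + /eqP]].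
case: h => [[[i|i]|[i|i]]|[[|[|[|n]]] Ht]];
case: h' => [[[j|j]|[j|j]]|[[|[|[|m]]] Ht']] //= _.
all: try by move=> /val_inj ->.
all: try by move=> [] /val_inj ->.
all: by move=> _; congr inr; apply: val_inj.
Qed.

Lemma Fadj_linked h h' :
  Fadj h h' = (h != h') && linked (part_of h) (index_of h) (part_of h') (index_of h').
Proof.
rewrite /Fadj; congr (_ && _).
by case: h => [[[i|i]|[i|i]]|[[|[|[|n]]] Ht]];
   case: h' => [[[j|j]|[j|j]]|[[|[|[|m]]] Ht']] //=; rewrite ?orbF // eq_sym.
Qed.
Lemma blowup_adjE (V : finType) (adj : rel V) (p : V -> FV k l) :
  (forall x y : V, x != y -> adj x y = (p x == p y) || Fadj (p x) (p y)) ->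
  forall v v', v != v' -> adj v v' =
    ((part_of (p v) == part_of (p v')) && (index_of (p v) == index_of (p v'))) ||
    linked (part_of (p v)) (index_of (p v)) (part_of (p v')) (index_of (p v')).
Proof. by move=> adjE v v' nvv'; rewrite adjE // Fadj_linked eq_FV; case: (_ && _). Qed.

End GraphF.

Lemma big_minn_le (I : finType) x (P : pred I) (F : I -> nat) j :
  P j -> \big[minn/x]_(i | P i) F i <= F j.
Proof.
rewrite -big_filter; have : j \in index_enum I := mem_index_enum j.
elim: (index_enum I) => // i s IH; rewrite in_cons => /orP[/eqP<- Pi|/IH le Pj].
  by rewrite /= Pi big_cons geq_minl.
by rewrite /=; case: (P i); rewrite ?big_cons ?geq_min le ?orbT.
Qed.

Lemma chi_le (V : finType) (adj : rel V) n : colorable adj n -> chi adj <= n.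
Proof.
move=> col_n; rewrite /chi; case: (leqP n #|V|) => [le_nV|lt_Vn].
  exact: (@big_minn_le _ _ _ _ (Ordinal (le_nV : n < #|V|.+1))).
apply: leq_trans (ltnW lt_Vn); elim/big_ind: _ => // [x y|i _].
  by rewrite geq_min => ->.
by rewrite -ltnS.
Qed.

Lemma colorable_of_colouring (V : finType) (adj : rel V) (col : V -> nat) n :
  (forall v, col v < n) -> (forall v v', adj v v' -> col v != col v') ->
  colorable adj n.
Proof.
move=> col_lt proper; apply/existsP; exists [ffun v => Ordinal (col_lt v)].
by apply/forallP => v; apply/forallP => v'; apply/implyP => /proper; rewrite !ffunE.
Qed.

Section Colouring.
Variables (V : finType) (adj : rel V) (kind : V -> part) (idx : V -> nat).
Hypothesis adj_irr : irreflexive adj.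
Hypothesis adjE : forall v v', v != v' -> adj v v' =
  ((kind v == kind v') && (idx v == idx v')) || linked (kind v) (idx v) (kind v') (idx v').
Hypothesis idx_hub : forall v, is_hub (kind v) -> idx v = 0.

Let w := omega adj.
Let c := (5 * w + 3) %/ 4.

Definition npart P := #|[set v | kind v == P]|.
Definition ncell P i := #|[set v | (kind v == P) && (idx v == i)]|.
Definition nbelow P i := #|[set v | (kind v == P) && (idx v < i)]|.

Lemma five_omega_le : 5 * w <= 4 * c.
Proof.
by rewrite /c; have := divn_eq (5 * w + 3) 4; have := ltn_pmod (5 * w + 3) (isT : 0 < 4); lia.
Qed.

Lemma card_clique_cells (S : pred V) :
  (forall v v', S v -> S v' ->
     ((kind v == kind v') && (idx v == idx v')) ||
     linked (kind v) (idx v) (kind v') (idx v')) ->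
  #|[set v | S v]| <= w.
Proof.
move=> Sclique; apply: (leq_bigmax_cond (F := fun S : {set V} => #|S|)).
apply/forallP => v; apply/implyP; rewrite inE => Sv.
apply/forallP => v'; apply/implyP; rewrite inE => Sv'.
by apply/implyP => nvv'; rewrite adjE // Sclique.
Qed.

Lemma npart_hub P : is_hub P -> npart P = ncell P 0.
Proof.
move=> hubP; apply: eq_card => v; rewrite !inE.
by case: eqP => //= kv; rewrite idx_hub ?kv.
Qed.

(* Merge the disjoint cells into one vertex set; it is a clique because any
   two of its cells coincide or are linked. *)
Ltac clique_cells :=
  rewrite ?(npart_hub (P := PX)) ?(npart_hub (P := PY)) ?(npart_hub (P := PZ)) //;
  rewrite -?card_predU_disjoint; [apply: card_clique_cells | ..];
  do ?[match goal with |- forall _ : ?T, _ =>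
         lazymatch type of T with Prop => fail | _ => move=> ? end end];
  do ?[match goal with |- context [kind ?u] => case: (kind u) end] => //=;
  rewrite ?orbF ?andbT //; do ?[move=> /eqP-> | move=> _]; by rewrite ?eqxx ?orbT.

Lemma clique_A_X : npart PA + npart PX <= w. Proof. clique_cells. Qed.
Lemma clique_A_Z : npart PA + npart PZ <= w. Proof. clique_cells. Qed.
Lemma clique_B_Y : npart PB + npart PY <= w. Proof. clique_cells. Qed.
Lemma clique_B_Z : npart PB + npart PZ <= w. Proof. clique_cells. Qed.
Lemma clique_X_Y : npart PX + npart PY <= w. Proof. clique_cells. Qed.
Lemma clique_A_U_X i : ncell PA i + ncell PU i + npart PX <= w. Proof. clique_cells. Qed.
Lemma clique_X_Y_U i : npart PX + npart PY + ncell PU i <= w. Proof. clique_cells. Qed.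
Lemma clique_B_W_Y i : ncell PB i + ncell PW i + npart PY <= w. Proof. clique_cells. Qed.
Lemma clique_X_Y_W i : npart PX + npart PY + ncell PW i <= w. Proof. clique_cells. Qed.

(* Layout of [0, c): A takes [0, |A|), B takes [|A| - overflow, zlo) and Z
   starts at zlo; y gets [0, tA) and [zlo, ...), x gets [zlo - tB, zlo) and the
   top of the palette. *)
Definition overflow := npart PA + npart PB + npart PZ - c.
Definition tA := minn (npart PY) (npart PA - overflow).
Definition tB := minn (npart PX) (npart PB - overflow).
Definition zlo := npart PA + npart PB - overflow.

Lemma layout :
  zlo = npart PA + npart PB - overflow /\
  overflow <= npart PA /\ overflow <= npart PB /\ zlo + npart PZ <= c /\
  tA <= npart PY /\ tA <= npart PA - overflow /\
  tB <= npart PX /\ tB <= npart PB - overflow /\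
  zlo + (npart PY - tA) + (npart PX - tB) <= c.
Proof.
have := five_omega_le; have := clique_A_X; have := clique_A_Z; have := clique_B_Y.
have := clique_B_Z; have := clique_X_Y; rewrite /zlo /tA /tB /overflow; lia.
Qed.

Definition XY_colour x := [|| x < tA, zlo <= x < zlo + (npart PY - tA),
  zlo - tB <= x < zlo | c - npart PX + tB <= x < c].

Definition A_band i x :=
  tA + high tA (npart PA) (nbelow PA i) <= x <
  tA + high tA (npart PA) (nbelow PA i + ncell PA i).

Definition B_band i x :=
  npart PA - overflow + high tB (npart PB) (nbelow PB i) <= x <
  npart PA - overflow + high tB (npart PB) (nbelow PB i + ncell PB i).

Definition U_colours i := [seq x <- iota 0 c | ~~ (XY_colour x || A_band i x)].
Definition W_colours i := [seq x <- iota 0 c | ~~ (XY_colour x || B_band i x)].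

Lemma count_XY_colour : count XY_colour (iota 0 c) <= npart PX + npart PY.
Proof.
apply: leq_trans (count_orb_le _ _ _) _.
apply: leq_trans (leq_add (leqnn _) (count_orb_le _ _ _)) _.
apply: leq_trans (leq_add (leqnn _) (leq_add (leqnn _) (count_orb_le _ _ _))) _.
have : count (fun x => x < tA) (iota 0 c) <= tA - 0 := count_interval c 0 tA.
have := count_interval c zlo (zlo + (npart PY - tA)).
have := count_interval c (zlo - tB) zlo; have := count_interval c (c - npart PX + tB) c.
have := layout; lia.
Qed.

Lemma nbelow_ncell_le P i : nbelow P i + ncell P i <= npart P.
Proof. exact: (card_level_le idx (fun v => kind v == P)). Qed.

Lemma size_U_colours i : ncell PU i <= size (U_colours i).
Proof.
rewrite /U_colours size_filter_iotaC.
have := count_orb_le XY_colour (A_band i) (iota 0 c).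
have : count (A_band i) (iota 0 c) <= _ := count_interval _ _ _.
have := cell_budget five_omega_le clique_A_X clique_A_Z clique_B_Y clique_B_Z clique_X_Y
  (erefl overflow) (erefl tA) (nbelow_ncell_le PA i) (clique_A_U_X i) (clique_X_Y_U i).
have := count_XY_colour; lia.
Qed.

Lemma size_W_colours i : ncell PW i <= size (W_colours i).
Proof.
rewrite /W_colours size_filter_iotaC.
have := count_orb_le XY_colour (B_band i) (iota 0 c).
have : count (B_band i) (iota 0 c) <= _ := count_interval _ _ _.
have overflowC : overflow = npart PB + npart PA + npart PZ - c.
  by rewrite /overflow (addnC (npart PA)).
have YX : npart PY + npart PX <= w by rewrite addnC clique_X_Y.
have YXW : npart PY + npart PX + ncell PW i <= w by rewrite (addnC (npart PY)) clique_X_Y_W.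
have := cell_budget five_omega_le clique_B_Y clique_B_Z clique_A_X clique_A_Z YX
  overflowC (erefl tB) (nbelow_ncell_le PB i) (clique_B_W_Y i) YXW.
have := count_XY_colour; lia.
Qed.

Lemma tA_le : tA <= npart PA. Proof. by have := layout; lia. Qed.
Lemma tB_le : tB <= npart PB. Proof. by have := layout; lia. Qed.

Definition prank P v := rank idx (fun u => kind u == P) v.
Definition crank v := rank idx (fun u => (kind u == kind v) && (idx u == idx v)) v.

Lemma prank_lt P v : kind v = P -> prank P v < npart P.
Proof. by move=> Kv; apply: rank_lt; rewrite Kv. Qed.

Lemma prank_inj P v v' : kind v = P -> kind v' = P -> prank P v = prank P v' -> v = v'.
Proof. by move=> Kv Kv'; apply: rank_inj; rewrite ?Kv ?Kv'. Qed.

Lemma prank_cell P v : kind v = P ->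
  nbelow P (idx v) <= prank P v < nbelow P (idx v) + ncell P (idx v).
Proof.
by move=> Kv; apply: (rank_within_level idx (P := fun u => kind u == P)); rewrite Kv.
Qed.

Lemma crank_lt v : crank v < ncell (kind v) (idx v).
Proof. by apply: rank_lt; rewrite !eqxx. Qed.

Lemma crank_inj v v' : kind v = kind v' -> idx v = idx v' -> crank v = crank v' -> v = v'.
Proof. by move=> Ek Ei; rewrite /crank Ek Ei; apply: rank_inj; rewrite ?Ek ?Ei !eqxx. Qed.

Lemma crank_U_colours v : kind v = PU -> crank v < size (U_colours (idx v)).
Proof. by move=> Kv; apply: leq_trans (size_U_colours _); rewrite -Kv crank_lt. Qed.

Lemma crank_W_colours v : kind v = PW -> crank v < size (W_colours (idx v)).
Proof. by move=> Kv; apply: leq_trans (size_W_colours _); rewrite -Kv crank_lt. Qed.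

Definition colour v : nat :=
  match kind v with
  | PA => slot tA (npart PA) 0 tA (prank PA v)
  | PU => nth 0 (U_colours (idx v)) (crank v)
  | PB => slot tB (npart PB) (zlo - tB) (npart PA - overflow) (prank PB v)
  | PW => nth 0 (W_colours (idx v)) (crank v)
  | PX => if prank PX v < tB then zlo - tB + prank PX v else c - npart PX + prank PX v
  | PY => if prank PY v < tA then prank PY v else zlo + (prank PY v - tA)
  | PZ => zlo + prank PZ v
  end.

Definition palette P i x : bool :=
  match P with
  | PA => (x < npart PA) && (XY_colour x || A_band i x)
  | PU => (x < c) && ~~ (XY_colour x || A_band i x)
  | PB => (npart PA - overflow <= x < zlo) && (XY_colour x || B_band i x)
  | PW => (x < c) && ~~ (XY_colour x || B_band i x)
  | PX => (zlo - tB <= x < zlo) || (c - npart PX + tB <= x < c)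
  | PY => (x < tA) || (zlo <= x < zlo + (npart PY - tA))
  | PZ => zlo <= x < zlo + npart PZ
  end.

Lemma colour_in_palette v : palette (kind v) (idx v) (colour v).
Proof.
rewrite /palette /colour /XY_colour /A_band /B_band; have := layout.
case Kv: (kind v) => /=.
- have := prank_lt Kv; have := nbelow_ncell_le PA (idx v).
  have := slot_mem tA_le 0 tA (prank_cell Kv) (nbelow_ncell_le PA (idx v)).
  have := high_le tA_le (nbelow_ncell_le PA (idx v)); lia.
- move=> _; move/(mem_nth 0): (crank_U_colours Kv).
  by rewrite mem_filter mem_iota add0n => /andP[-> /andP[_ ->]].
- have := prank_lt Kv; have := high_le tB_le (nbelow_ncell_le PB (idx v)).
  have := slot_mem tB_le (zlo - tB) (npart PA - overflow) (prank_cell Kv)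
    (nbelow_ncell_le PB (idx v)); lia.
- move=> _; move/(mem_nth 0): (crank_W_colours Kv).
  by rewrite mem_filter mem_iota add0n => /andP[-> /andP[_ ->]].
- have := prank_lt Kv; case: ifP; lia.
- have := prank_lt Kv; case: ifP; lia.
- have := prank_lt Kv; lia.
Qed.

Lemma palettes_disjoint P i P' j x :
  P != P' -> linked P i P' j -> palette P i x -> ~~ palette P' j x.
Proof.
rewrite /palette /XY_colour /A_band /B_band; have := layout.
by case: P; case: P' => //= lay _; try move=> /eqP->; lia.
Qed.

Lemma colour_lt v : colour v < c.
Proof.
have := colour_in_palette v; have := layout; rewrite /palette.
by case: (kind v); lia.
Qed.

Lemma colour_inj v v' : kind v = kind v' -> (kind v \in [:: PU; PW] -> idx v = idx v') ->
  colour v = colour v' -> v = v'.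
Proof.
move=> Ek; rewrite /colour -Ek; case Kv: (kind v) => same_cell.
all: have Kv' := etrans (esym Ek) Kv.
- move/(slot_inj (lo := 0) (hi := tA) tA_le (or_introl (leqnn tA))
    (prank_lt Kv) (prank_lt Kv')).
  exact: prank_inj.
- have Ei := same_cell isT; have := crank_U_colours Kv; have := crank_U_colours Kv'.
  rewrite -Ei => lt' lt /eqP; rewrite nth_uniq ?filter_uniq ?iota_uniq // => /eqP.
  exact: crank_inj.
- have bands : npart PA - overflow + (npart PB - tB) <= zlo - tB by have := layout; lia.
  move/(slot_inj tB_le (or_intror bands) (prank_lt Kv) (prank_lt Kv')).
  exact: prank_inj.
- have Ei := same_cell isT; have := crank_W_colours Kv; have := crank_W_colours Kv'.
  rewrite -Ei => lt' lt /eqP; rewrite nth_uniq ?filter_uniq ?iota_uniq // => /eqP.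
  exact: crank_inj.
all: move=> E; apply: (prank_inj Kv Kv'); move: E.
all: have := prank_lt Kv; have := prank_lt Kv'; have := layout.
all: by do ?case: ifP; lia.
Qed.

Lemma colour_proper v v' : adj v v' -> colour v != colour v'.
Proof.
move=> adj_vv'; have nvv' : v != v' by apply: contraTneq adj_vv' => ->; rewrite adj_irr.
move: adj_vv'; rewrite adjE // => /orP[/andP[/eqP Ek /eqP Ei]|lnk].
  by apply: contra_neq nvv'; apply: colour_inj.
case: (eqVneq (kind v) (kind v')) => [Ek|Nk].
  apply: contra_neq nvv'; apply: colour_inj => //.
  by move: lnk; rewrite -Ek; case: (kind v).
apply/eqP => E; move: (palettes_disjoint Nk lnk (colour_in_palette v)).
by rewrite E colour_in_palette.
Qed.

End Colouring.

Theorem theorem5p12 (k l : nat) (V : finType) (adj : rel V)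
    (adj_sym : symmetric adj) (adj_irr : irreflexive adj)
    (Hblow : is_blowup adj (@Fadj k l)) :
  chi adj <= (5 * omega adj + 3) %/ 4.
Proof.
case: Hblow => p /blowup_adjE adjE.
have idx_hub v : is_hub (part_of (p v)) -> index_of (p v) = 0 := @index_of_hub k l (p v).
apply/chi_le/(colorable_of_colouring (colour_lt adjE idx_hub)).
exact: colour_proper adj_irr adjE idx_hub.
Qed.
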